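(* Let $G$ be an $n$-node graph with a colored tree labeling, let $k\ge1$, and let $c\ge 3/2$ be a constant with $p=(c\log n)/n^{1/k}\le 1$. Suppose each node of $G$ is independently chosen to be a way-point with probability $p$. Call a short segment any directed path or cycle $S$ contained in some maximal connected subgraph $C$ of $G_k$ all of whose nodes have the same level $\ell$ with $1<\ell\le k$, such that $|S|\le 4n^{1/k}$; call $S$ crowded if it contains more than $8c\log n$ way-points. Then \[ \Pr(G_k \text{ contains a crowded short segment}) = O(1/n). \]
   Context: Colored tree labelings. A colored tree labeling of a graph $G$ of bounded degree assigns to each node $v$ a parent $\mathrm{P}(v)$, a left child $\mathrm{LC}(v)$ and a right child $\mathrm{RC}(v)$, each a port number of $v$ or $\bot$ (a non-$\bot$ value is identified with the neighbor reached through that port; the non-$\bot$ values at $v$ are pairwise distinct), and a color $\chi_{\mathrm{in}}(v)\in\{R,B\}$. Hierarchical forest. Define $\mathrm{level}(v)=1$ if $\mathrm{RC}(v)=\bot$ and $\mathrm{level}(v)=1+\mathrm{level}(\mathrm{RC}(v))$ otherwise. For $k\ge1$, the hierarchical forest $G_k$ contains the edge $\{u,v\}$ iff $\mathrm{level}(u),\mathrm{level}(v)\le k$, $v=\mathrm{P}(u)$, and either ($u=\mathrm{LC}(v)$ and $\mathrm{level}(v)=\mathrm{level}(u)$) or ($u=\mathrm{RC}(v)$ and $\mathrm{level}(v)=\mathrm{level}(u)+1$); it is viewed as directed from $v$ (parent) to $u$ (child). Each maximal connected subgraph of $G_k$ whose nodes all have the same level is a directed path or cycle along $\mathrm{LC}$-edges.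 Here $\log$ denotes the natural logarithm (the statement also holds with base 2). *)

From Stdlib Require Import Reals List Arith Lia ClassicalEpsilon.
Import ListNotations.
Open Scope R_scope.

Record graph := mkGraph {
  gn : nat;
  adj : nat -> nat -> bool
}.

Definition simple_graph (G : graph) : Prop :=
  (forall u v, adj G u v = true -> (u < gn G)%nat /\ (v < gn G)%nat) /\
  (forall u v, adj G u v = adj G v u) /\
  (forall u, adj G u u = false).

Definition degree (G : graph) (v : nat) : nat :=
  length (filter (fun w => adj G v w) (seq 0 (gn G))).

Definition max_degree_le (G : graph) (D : nat) : Prop :=
  forall v, (v < gn G)%nat -> (degree G v <= D)%nat.

(* Colored tree labeling. A port number is identified with the neighbor it
   reaches, so P, LC, RC take values in option nodes (None = bot). *)
Record labeling := mkLab {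
  P : nat -> option nat;
  LC : nat -> option nat;
  RC : nat -> option nat;
  chi_in : nat -> bool   (* true = R, false = B *)
}.

Definition port_ok (G : graph) (v : nat) (o : option nat) : Prop :=
  match o with None => True | Some w => adj G v w = true end.

Definition distinct_opt (a b : option nat) : Prop :=
  match a, b with Some x, Some y => x <> y | _, _ => True end.

Definition colored_tree_labeling (G : graph) (L : labeling) : Prop :=
  forall v, (v < gn G)%nat ->
    port_ok G v (P L v) /\ port_ok G v (LC L v) /\ port_ok G v (RC L v) /\
    distinct_opt (P L v) (LC L v) /\ distinct_opt (P L v) (RC L v) /\
    distinct_opt (LC L v) (RC L v).

(* level(v) = 1 if RC(v) = bot, 1 + level(RC(v)) otherwise.  Nodes whose
   RC-chain never reaches bot have no level (and are in no G_k). *)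
Inductive has_level (L : labeling) : nat -> nat -> Prop :=
  | lvl_base : forall v, RC L v = None -> has_level L v 1
  | lvl_step : forall v u l, RC L v = Some u -> has_level L u l ->
               has_level L v (S l).

(* Directed edge v -> u (v parent, u child) of the hierarchical forest G_k. *)
Definition Gk_edge (G : graph) (L : labeling) (k : nat) (v u : nat) : Prop :=
  (u < gn G)%nat /\ (v < gn G)%nat /\
  exists lu lv, has_level L u lu /\ has_level L v lv /\
    (lu <= k)%nat /\ (lv <= k)%nat /\ P L u = Some v /\
    ((LC L v = Some u /\ lv = lu) \/ (RC L v = Some u /\ lv = S lu)).

Fixpoint consecutive (E : nat -> nat -> Prop) (s : list nat) : Prop :=
  match s with
  | x :: ((y :: _) as t) => E x y /\ consecutive E t
  | _ => True
  end.

(* A directed path S (a directed cycle has the same node set as the path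
   through its nodes, so cycles need not be listed separately) of G_k all of whose nodes have the same level
   l with 1 < l <= k (hence S lies in a maximal same-level connected
   subgraph C of G_k), with at most 4 n^(1/k) nodes. *)
Definition short_segment (G : graph) (L : labeling) (k : nat) (S : list nat) : Prop :=
  S <> [] /\ NoDup S /\
  (exists l, (1 < l)%nat /\ (l <= k)%nat /\ forall v, In v S -> has_level L v l) /\
  consecutive (Gk_edge G L k) S /\
  INR (length S) <= 4 * Rpower (INR (gn G)) (1 / INR k).

Definition is_wp (w : list bool) (v : nat) : bool := nth v w false.

Definition crowded (c : R) (n : nat) (w : list bool) (S : list nat) : Prop :=
  INR (length (filter (is_wp w) S)) > 8 * c * ln (INR n).

(* Product probability space: each node independently a way-point with prob p. *)
Fixpoint assignments (n : nat) : list (list bool) :=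
  match n with
  | O => (@nil bool) :: nil
  | S m => map (cons true) (assignments m) ++ map (cons false) (assignments m)
  end.

Definition weight (p : R) (w : list bool) : R :=
  fold_right (fun (b : bool) (acc : R) => (if b then p else 1 - p) * acc) 1 w.

Definition indicator (A : Prop) : R :=
  if excluded_middle_informative A then 1 else 0.

Definition Pr (n : nat) (p : R) (E : list bool -> Prop) : R :=
  fold_right Rplus 0 (map (fun w => weight p w * indicator (E w)) (assignments n)).

(* A crowded short segment forces a crowded left-child window.

   In a maximal same-level component of G_k consecutive nodes are joined by
   LC-edges, so a short segment S = v :: s is an initial piece of the LC-chain
   v, LC(v), LC(LC(v)), ...  Fixing an integer M with 4 n^(1/k) <= M <= 4 n^(1/k) + 1,
   S therefore lies in the window T(v) formed by the first M nodes of that chain,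
   and if S is crowded then T(v) contains more than t = 8 c log n way-points.

   The theorem follows by the union bound over the n
   window starts v:  Pr <= n exp(p M) / 2^t <= n exp(4 c log n + 1) / n^(8 c ln 2),
   which is at most e / n because ln 2 >= 2/3 and c >= 3/2. *)

From Stdlib Require Import Reals Lra Lia List Bool ClassicalEpsilon ZArith.
Open Scope bool_scope.
Open Scope R_scope.

Lemma exp_mult_nat (n : nat) (x : R) : exp (INR n * x) = exp x ^ n.
Proof.
  induction n as [|n IH]; simpl pow.
  - now rewrite Rmult_0_l, exp_0.
  - rewrite S_INR, Rmult_plus_distr_r, Rmult_1_l, exp_plus, IH. ring.
Qed.

(* ln 2 >= 2/3, the numerical fact that makes c >= 3/2 sufficient:
   exp(1/15) <= 15/14 by 1 - 1/15 <= exp(-1/15), so exp(2/3) <= (15/14)^10 <= 2. *)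
Lemma ln2_ge_2_3 : 2 / 3 <= ln 2.
Proof.
  assert (small_step : exp (1 / 15) <= 15 / 14).
  { pose proof (exp_ineq1_le (- (1 / 15))) as lower.
    assert (inv : exp (1 / 15) * exp (- (1 / 15)) = 1)
      by (rewrite <- exp_plus, Rplus_opp_r; apply exp_0).
    pose proof (exp_pos (1 / 15)). nra. }
  assert (exp_bound : exp (2 / 3) <= 2).
  { replace (2 / 3) with (INR 10 * (1 / 15)) by (simpl; field).
    rewrite exp_mult_nat.
    apply Rle_trans with ((15 / 14) ^ 10).
    - apply pow_incr. split; [left; apply exp_pos | exact small_step].
    - simpl; lra. }
  destruct (Rle_or_lt (2 / 3) (ln 2)) as [ok | too_small]; [exact ok |].
  apply exp_increasing in too_small. rewrite exp_ln in too_small by lra. lra.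
Qed.

Lemma exp_le (x y : R) : x <= y -> exp x <= exp y.
Proof. intros [lt | ->]; [left; now apply exp_increasing | lra]. Qed.

Definition sumL {A : Type} (f : A -> R) (l : list A) : R := fold_right Rplus 0 (map f l).

Lemma sumL_app {A : Type} (f : A -> R) (l1 l2 : list A) :
  sumL f (l1 ++ l2) = sumL f l1 + sumL f l2.
Proof. unfold sumL; induction l1; simpl; [ring | rewrite IHl1; ring]. Qed.

Lemma sumL_map {A B : Type} (f : B -> R) (g : A -> B) (l : list A) :
  sumL f (map g l) = sumL (fun x => f (g x)) l.
Proof. unfold sumL; now rewrite map_map. Qed.

Lemma sumL_le {A : Type} (f g : A -> R) (l : list A) :
  (forall x, In x l -> f x <= g x) -> sumL f l <= sumL g l.
Proof.
  unfold sumL; induction l as [|a l IH]; intros fg; simpl; [lra |].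
  apply Rplus_le_compat; [apply fg; now left | apply IH; intros; apply fg; now right].
Qed.

Lemma sumL_nonneg {A : Type} (f : A -> R) (l : list A) :
  (forall x, In x l -> 0 <= f x) -> 0 <= sumL f l.
Proof.
  unfold sumL; induction l as [|a l IH]; intros f_nonneg; simpl; [lra |].
  apply Rplus_le_le_0_compat; [apply f_nonneg; now left | apply IH; intros; apply f_nonneg; now right].
Qed.

Lemma sumL_scale {A : Type} (f : A -> R) (a : R) (l : list A) :
  sumL (fun x => a * f x) l = a * sumL f l.
Proof. unfold sumL; induction l; simpl; [ring | rewrite IHl; ring]. Qed.

Lemma sumL_plus {A : Type} (f g : A -> R) (l : list A) :
  sumL (fun x => f x + g x) l = sumL f l + sumL g l.
Proof. unfold sumL; induction l; simpl; [ring | rewrite IHl; ring]. Qed.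

Lemma sumL_swap {A B : Type} (g : A -> B -> R) (la : list A) (lb : list B) :
  sumL (fun a => sumL (g a) lb) la = sumL (fun b => sumL (fun a => g a b) la) lb.
Proof.
  induction la as [|a la IH].
  - unfold sumL; simpl. induction lb; simpl; [ring | rewrite <- IHlb; ring].
  - change (sumL (g a) lb + sumL (fun a => sumL (g a) lb) la
            = sumL (fun b => g a b + sumL (fun a => g a b) la) lb).
    now rewrite IH, sumL_plus.
Qed.

Lemma sumL_ext {A : Type} (f g : A -> R) (l : list A) :
  (forall x, f x = g x) -> sumL f l = sumL g l.
Proof. intros fg; unfold sumL; now rewrite (map_ext f g). Qed.

Lemma sumL_ge_term {A : Type} (f : A -> R) (l : list A) (x : A) :
  In x l -> (forall y, In y l -> 0 <= f y) -> f x <= sumL f l.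
Proof.
  unfold sumL; induction l as [|a l IH]; intros x_in f_nonneg; [destruct x_in |]; simpl.
  assert (0 <= f a) by (apply f_nonneg; now left).
  assert (0 <= sumL f l) by (apply sumL_nonneg; intros; apply f_nonneg; now right).
  unfold sumL in *. destruct x_in as [<- | x_in]; [lra |].
  assert (f x <= fold_right Rplus 0 (map f l))
    by (apply IH; auto; intros; apply f_nonneg; now right).
  lra.
Qed.

Lemma sumL_bound {A : Type} (f : A -> R) (l : list A) (b : R) :
  (forall x, In x l -> f x <= b) -> sumL f l <= INR (length l) * b.
Proof.
  unfold sumL; induction l as [|a l IH]; intros bounded; cbn [map fold_right length];
    [simpl; lra |].
  rewrite S_INR.
  assert (f a <= b) by (apply bounded; now left).
  assert (fold_right Rplus 0 (map f l) <= INR (length l) * b)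
    by (apply IH; intros; apply bounded; now right).
  lra.
Qed.

Lemma Pr_as_sum (n : nat) (p : R) (E : list bool -> Prop) :
  Pr n p E = sumL (fun w => weight p w * indicator (E w)) (assignments n).
Proof. reflexivity. Qed.

Lemma weight_nonneg (p : R) (w : list bool) : 0 <= p <= 1 -> 0 <= weight p w.
Proof. intros p01; induction w as [|[|] w IH]; simpl; [lra | nra | nra]. Qed.

Lemma assignments_length (n : nat) (w : list bool) : In w (assignments n) -> length w = n.
Proof.
  revert w; induction n as [|n IH]; simpl; intros w w_in.
  - now destruct w_in as [<- | []].
  - apply in_app_or in w_in.
    destruct w_in as [w_in | w_in]; apply in_map_iff in w_in;
      destruct w_in as [w' [<- w'_in]]; simpl; f_equal; auto.
Qed.

Lemma indicator_cases (A : Prop) : (A /\ indicator A = 1) \/ (~ A /\ indicator A = 0).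
Proof. unfold indicator; destruct (excluded_middle_informative A); auto. Qed.

Lemma indicator_range (A : Prop) : 0 <= indicator A <= 1.
Proof. destruct (indicator_cases A) as [[_ ->] | [_ ->]]; lra. Qed.

Lemma union_bound (n m : nat) (p : R) (E : list bool -> Prop) (Q : nat -> list bool -> Prop) :
  0 <= p <= 1 ->
  (forall w, In w (assignments n) -> E w -> exists v, (v < m)%nat /\ Q v w) ->
  Pr n p E <= sumL (fun v => Pr n p (Q v)) (seq 0 m).
Proof.
  intros p01 covered. rewrite Pr_as_sum.
  change (sumL (fun v => Pr n p (Q v)) (seq 0 m)) with
    (sumL (fun v => sumL (fun w => weight p w * indicator (Q v w)) (assignments n)) (seq 0 m)).
  rewrite (sumL_swap (fun v w => weight p w * indicator (Q v w))). apply sumL_le. intros w w_in.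
  assert (terms_nonneg : forall v, In v (seq 0 m) -> 0 <= weight p w * indicator (Q v w)).
  { intros v _. apply Rmult_le_pos; [now apply weight_nonneg | apply indicator_range]. }
  destruct (indicator_cases (E w)) as [[Ew ->] | [_ ->]].
  - destruct (covered w w_in Ew) as [v [v_lt Qv]].
    eapply Rle_trans; [| apply (sumL_ge_term _ _ v); [apply in_seq; lia | exact terms_nonneg]].
    destruct (indicator_cases (Q v w)) as [[_ ->] | [nQ _]]; [lra | contradiction].
  - rewrite Rmult_0_r. now apply sumL_nonneg.
Qed.

(* Markov's inequality applied to 2^X: Pr(X > t) <= E[2^X] / 2^t. *)
Lemma exp_markov (n : nat) (p : R) (X : list bool -> nat) (t : R) :
  0 <= p <= 1 ->
  Pr n p (fun w => INR (X w) > t)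
    <= sumL (fun w => weight p w * 2 ^ X w) (assignments n) / exp (t * ln 2).
Proof.
  intros p01. rewrite Pr_as_sum. unfold Rdiv. rewrite Rmult_comm, <- sumL_scale.
  apply sumL_le. intros w _.
  pose proof (weight_nonneg p w p01). pose proof (exp_pos (t * ln 2)).
  assert (ln2_pos : 0 < ln 2) by (pose proof ln_lt_2; lra).
  assert (two_pow : 2 ^ X w = exp (INR (X w) * ln 2))
    by (rewrite <- Rpower_pow by lra; reflexivity).
  assert (0 < / exp (t * ln 2)) by (now apply Rinv_0_lt_compat).
  destruct (indicator_cases (INR (X w) > t)) as [[large ->] | [_ ->]].
  - rewrite two_pow.
    assert (exp (t * ln 2) <= exp (INR (X w) * ln 2)) by (apply exp_le; nra).
    assert (1 <= / exp (t * ln 2) * exp (INR (X w) * ln 2)).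
    { apply (Rmult_le_reg_l (exp (t * ln 2))); auto.
      rewrite <- Rmult_assoc, Rinv_r by lra. lra. }
    nra.
  - rewrite Rmult_0_r. apply Rmult_le_pos; [lra |].
    apply Rmult_le_pos; [lra | apply pow_le; lra].
Qed.

Definition wp_count (h : nat -> bool) (w : list bool) : nat :=
  length (filter (fun i => h i && is_wp w i) (seq 0 (length w))).

Lemma filter_seq_succ (f : nat -> bool) (m : nat) :
  length (filter f (seq 0 (S m)))
  = ((if f 0%nat then 1 else 0) + length (filter (fun i => f (S i)) (seq 0 m)))%nat.
Proof.
  cbn [seq filter]. rewrite <- seq_shift, filter_map_swap.
  destruct (f 0%nat); simpl; now rewrite length_map.
Qed.

Lemma wp_count_cons (h : nat -> bool) (b : bool) (w : list bool) :
  wp_count h (b :: w)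
  = ((if h 0%nat && b then 1 else 0) + wp_count (fun i => h (S i)) w)%nat.
Proof. unfold wp_count. now rewrite (filter_seq_succ _ (length w)). Qed.

(* Moment bound: E[2^X] <= exp(p |T|) for the way-point count X of a node set T,
   by independence of the nodes and 1 + p <= exp p. *)
Lemma wp_moment (p : R) (h : nat -> bool) (n : nat) :
  0 <= p <= 1 ->
  sumL (fun w => weight p w * 2 ^ wp_count h w) (assignments n)
    <= exp (p * INR (length (filter h (seq 0 n)))).
Proof.
  intros p01. revert h; induction n as [|n IH]; intros h.
  - unfold sumL; simpl. rewrite Rmult_0_r, exp_0. lra.
  - set (h' := fun i => h (S i)).
    set (rest := sumL (fun w => weight p w * 2 ^ wp_count h' w) (assignments n)).
    set (f0 := if h 0%nat then 2 else 1).
    assert (rest_nonneg : 0 <= rest).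
    { apply sumL_nonneg. intros w _.
      apply Rmult_le_pos; [now apply weight_nonneg | apply pow_le; lra]. }
    assert (first_node : sumL (fun w => weight p w * 2 ^ wp_count h w) (assignments (S n))
                         = (p * f0 + (1 - p)) * rest).
    { assert (on_true : forall w, weight p (true :: w) * 2 ^ wp_count h (true :: w)
                                  = (p * f0) * (weight p w * 2 ^ wp_count h' w)).
      { intros w; rewrite wp_count_cons, andb_true_r.
        unfold f0, h'; destruct (h 0%nat); simpl; ring. }
      assert (on_false : forall w, weight p (false :: w) * 2 ^ wp_count h (false :: w)
                                   = (1 - p) * (weight p w * 2 ^ wp_count h' w)).
      { intros w; rewrite wp_count_cons, andb_false_r. unfold h'; simpl; ring. }
      cbn [assignments]. rewrite sumL_app, !sumL_map.
      rewrite (sumL_ext _ _ _ on_true), (sumL_ext _ _ _ on_false), !sumL_scale.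
      fold rest. ring. }
    rewrite first_node, filter_seq_succ. fold h'.
    specialize (IH h'). fold rest in IH.
    unfold f0; destruct (h 0%nat).
    + rewrite plus_INR, Rmult_plus_distr_l, Rmult_1_r, exp_plus.
      pose proof (exp_ineq1_le p).
      apply Rmult_le_compat; lra.
    + rewrite Nat.add_0_l. lra.
Qed.

Lemma level_unique (L : labeling) (v l1 l2 : nat) :
  has_level L v l1 -> has_level L v l2 -> l1 = l2.
Proof.
  intros lvl1; revert l2; induction lvl1 as [v no_rc | v u l rc lvl_u IH];
    intros l2 lvl2; inversion lvl2 as [v' no_rc' | v' u' l' rc' lvl_u']; subst;
    try congruence.
  rewrite rc in rc'; injection rc' as <-. f_equal; auto.
Qed.

(* Between two nodes of equal level a G_k-edge is an LC-edge (an RC-edge would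
   raise the level by one). *)
Lemma same_level_edges_are_LC (G : graph) (L : labeling) (k l : nat) (s : list nat) :
  (forall v, In v s -> has_level L v l) ->
  consecutive (Gk_edge G L k) s -> consecutive (fun a b => LC L a = Some b) s.
Proof.
  induction s as [|a s IH]; intros same_level edges; simpl; auto.
  destruct s as [|b s]; auto. destruct edges as [edge edges]. split.
  - destruct edge as (_ & _ & lu & lv & lvl_u & lvl_v & _ & _ & _ & [[lc _] | [_ up]]);
      [exact lc |].
    assert (lu = l) by (apply (level_unique L b); auto; apply same_level; simpl; auto).
    assert (lv = l) by (apply (level_unique L a); auto; apply same_level; simpl; auto).
    lia.
  - apply IH; auto. intros; apply same_level; simpl; auto.
Qed.

Definition next_LC (L : labeling) (v : nat) : nat :=
  match LC L v with Some u => u | None => v end.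

Fixpoint LC_iter (L : labeling) (v j : nat) : nat :=
  match j with O => v | S j' => LC_iter L (next_LC L v) j' end.

Definition LC_window (L : labeling) (M v : nat) (i : nat) : bool :=
  existsb (fun j => Nat.eqb (LC_iter L v j) i) (seq 0 M).

Lemma LC_path_in_window (L : labeling) (M v : nat) (s : list nat) :
  consecutive (fun a b => LC L a = Some b) (v :: s) -> (length (v :: s) <= M)%nat ->
  forall y, In y (v :: s) -> LC_window L M v y = true.
Proof.
  intros path short y y_in. unfold LC_window. apply existsb_exists.
  enough (exists j, (j < length (v :: s))%nat /\ LC_iter L v j = y) as (j & j_lt & <-).
  { exists j. split; [apply in_seq; lia | apply Nat.eqb_refl]. }
  clear short. revert v path y_in; induction s as [|u s IH]; intros v path y_in.
  - destruct y_in as [<- | []]. exists 0%nat; simpl; split; auto.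
  - destruct path as [lc path]. destruct y_in as [<- | y_in].
    + exists 0%nat; simpl; split; [lia | auto].
    + destruct (IH u path y_in) as [j [j_lt at_j]]. exists (S j). simpl in *.
      unfold next_LC; rewrite lc. split; [lia | auto].
Qed.

Lemma LC_window_size (L : labeling) (M v n : nat) :
  (length (filter (LC_window L M v) (seq 0 n)) <= M)%nat.
Proof.
  rewrite <- (length_seq M 0) at 2. rewrite <- (length_map (LC_iter L v) (seq 0 M)).
  apply NoDup_incl_length; [apply NoDup_filter, seq_NoDup |].
  intros i i_in. apply filter_In in i_in as [_ in_window].
  apply existsb_exists in in_window as [j [j_in at_j]]. apply Nat.eqb_eq in at_j.
  apply in_map_iff. now exists j.
Qed.

Lemma is_wp_lt (w : list bool) (y : nat) : is_wp w y = true -> (y < length w)%nat.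
Proof.
  unfold is_wp; intros wp. destruct (Nat.lt_ge_cases y (length w)) as [lt | ge]; auto.
  rewrite nth_overflow in wp by exact ge. discriminate.
Qed.

Lemma waypoints_in_set (h : nat -> bool) (w : list bool) (S : list nat) :
  NoDup S -> (forall y, In y S -> h y = true) ->
  (length (filter (is_wp w) S) <= wp_count h w)%nat.
Proof.
  intros nodup in_set. unfold wp_count. apply NoDup_incl_length; [now apply NoDup_filter |].
  intros y y_in. apply filter_In in y_in as [y_in wp]. apply filter_In. split.
  - apply in_seq. pose proof (is_wp_lt w y wp). lia.
  - now rewrite in_set, wp.
Qed.

Lemma crowded_segment_window (G : graph) (L : labeling) (k M : nat) (c : R)
    (w : list bool) (S : list nat) :
  length w = gn G -> 0 <= c * ln (INR (gn G)) ->
  short_segment G L k S -> (length S <= M)%nat -> crowded c (gn G) w S ->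
  exists v, (v < gn G)%nat /\
    INR (wp_count (LC_window L M v) w) > 8 * c * ln (INR (gn G)).
Proof.
  intros w_len t_nonneg (nonempty & nodup & (l & _ & _ & same_level) & edges & _)
    short crowd.
  destruct S as [|v s]; [congruence |].
  pose proof (same_level_edges_are_LC G L k l _ same_level edges) as path.
  pose proof (waypoints_in_set (LC_window L M v) w _ nodup
                (LC_path_in_window L M v s path short)) as counted.
  apply le_INR in counted. unfold crowded in crowd.
  exists v. split; [| lra].
  destruct s as [|u s].
  - destruct (is_wp w v) eqn:wp; [rewrite <- w_len; now apply is_wp_lt |].
    simpl in crowd. rewrite wp in crowd. simpl in crowd. lra.
  - destruct edges as [(_ & v_lt & _) _]. exact v_lt.
Qed.

Lemma nat_between (x : R) : 0 <= x -> exists M : nat, x <= INR M <= x + 1.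
Proof.
  intros x_nonneg. destruct (archimed x) as [above within].
  exists (Z.to_nat (up x)). rewrite INR_IZR_INZ, Z2Nat.id; [lra |].
  apply le_IZR. lra.
Qed.

(* The final estimate n exp(a) / 2^(8 c log n) <= e / n when a <= 4 c log n + 1;
   the exponent of n is 1 + 4c - 8c ln 2 <= 1 - 4c/3 <= -1. *)
Lemma final_tail_estimate (nr c a : R) :
  1 <= nr -> 3 / 2 <= c -> a <= 4 * c * ln nr + 1 ->
  nr * (exp a / exp (8 * c * ln nr * ln 2)) <= exp 1 / nr.
Proof.
  intros nr_ge c_ge a_le.
  assert (log_nonneg : 0 <= ln nr).
  { destruct nr_ge as [gt | <-]; [| rewrite ln_1; lra].
    rewrite <- ln_1. left. apply ln_increasing; lra. }
  set (log_n := ln nr) in *.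
  assert (nr_eq : nr = exp log_n) by (unfold log_n; rewrite exp_ln; lra).
  assert (c_log_large : 3 / 2 * log_n <= c * log_n) by (apply Rmult_le_compat_r; lra).
  assert (ln2_large : c * log_n * (2 / 3) <= c * log_n * ln 2)
    by (apply Rmult_le_compat_l; [nra | exact ln2_ge_2_3]).
  rewrite nr_eq. unfold Rdiv. rewrite <- !exp_Ropp, <- Rmult_assoc, <- !exp_plus.
  apply exp_le. lra.
Qed.

Theorem mainTheorem8 :
  forall (c : R) (k D : nat), 3 / 2 <= c -> (1 <= k)%nat ->
  exists C : R, 0 < C /\
  forall (G : graph) (L : labeling),
    simple_graph G -> max_degree_le G D -> colored_tree_labeling G L ->
    (1 <= gn G)%nat ->
    let n := gn G in
    let p := c * ln (INR n) / Rpower (INR n) (1 / INR k) in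
    p <= 1 ->
    Pr n p (fun w => exists S, short_segment G L k S /\ crowded c n w S)
      <= C / INR n.
Proof.
  intros c k D c_ge _. exists (exp 1). split; [apply exp_pos |].
  intros G L _ _ _ n_pos n p p_le1.
  set (x := Rpower (INR n) (1 / INR k)) in p.
  set (t := 8 * c * ln (INR n)).
  assert (n_ge1 : 1 <= INR n) by (apply (le_INR 1); exact n_pos).
  assert (log_nonneg : 0 <= ln (INR n)).
  { destruct n_ge1 as [gt | eq]; [| rewrite <- eq, ln_1; lra].
    rewrite <- ln_1. left. apply ln_increasing; lra. }
  assert (x_pos : 0 < x) by (unfold x, Rpower; apply exp_pos).
  assert (p_nonneg : 0 <= p) by (unfold p, Rdiv; apply Rmult_le_pos;
    [nra | left; now apply Rinv_0_lt_compat]).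
  destruct (nat_between (4 * x)) as [M [M_lo M_hi]]; [lra |].
  assert (pM_le : p * INR M <= 4 * c * ln (INR n) + 1).
  { assert (p * x = c * ln (INR n)) by (unfold p; field; lra). nra. }
  apply Rle_trans with
    (sumL (fun v => Pr n p (fun w => INR (wp_count (LC_window L M v) w) > t)) (seq 0 n)).
  { apply union_bound; [lra |]. intros w w_in [S [segment crowd]].
    apply (crowded_segment_window G L k M c w S); auto.
    - now apply assignments_length.
    - apply Rmult_le_pos; [lra | exact log_nonneg].
    - apply INR_le. destruct segment as (_ & _ & _ & _ & short).
      change (Rpower (INR (gn G)) (1 / INR k)) with x in short. lra. }
  apply Rle_trans with (INR n * (exp (p * INR M) / exp (t * ln 2))).
  { rewrite <- (length_seq n 0) at 2. apply sumL_bound. intros v _.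
    eapply Rle_trans; [apply exp_markov; lra |].
    apply Rmult_le_compat_r; [left; apply Rinv_0_lt_compat, exp_pos |].
    eapply Rle_trans; [apply wp_moment; lra |].
    apply exp_le, Rmult_le_compat_l; [lra |]. apply le_INR, LC_window_size. }
  now apply final_tail_estimate.
Qed.
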